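(* Let $\kappa$ be an infinitesimal character of the gap-insertion Hopf algebra $\mathbf{H}$ of noncrossing partitions, and let $K$ be the character of the block-substitution bialgebra $\mathbf{B}$ with $K(P)=\kappa(P)$ for every nonempty noncrossing partition $P$. Let $e$ be the infinitesimal character of $\mathbf{H}$ with $e(P)=1$ if $P$ is a noncrossing partition with exactly one block and $e(P)=0$ for all other noncrossing partitions. Then $$\kappa=e\curvearrowleft K,$$ where $(\alpha\curvearrowleft\phi):=(\alpha\otimes\phi)\circ\rho$ for a linear form $\alpha$ on $\mathbf{H}$ and a character $\phi$ of $\mathbf{B}$.
   Context: Noncrossing partitions of $[n]$: no $a<c<b<d$ with $a,b$ in one block and $c,d$ in another; partitions of linearly ordered finite sets are identified with partitions of $[m]$ via the order-preserving bijection; $P_{|X}$ is the induced partition. $\mathbf{H}$ is the free associative unital algebra on nonempty noncrossing partitions (its Hopf structure is the gap-insertion coproduct; only its algebra structure and counit matter here: the counit $\varepsilon$ is $1$ on $\mathbf 1$ and $0$ on nonempty monomials). An infinitesimal character of $\mathbf{H}$ is a linear form $f$ with $f(xy)=f(x)\varepsilon(y)+\varepsilon(x)f(y)$, i.e. vanishing on $\mathbf 1$ and on products of two nonempty monomials. $\mathbf{B}$ is the free commutative unital algebra on nonempty noncrossing partitions; a character of $\mathbf B$ is a unital algebra homomorphism to $\mathbb K$. For noncrossing $P\leq Q$ (refinement) with $Q=\{\tau_1,\dots,\tau_l\}$, $P/Q=P_{|\tau_1}\cdots P_{|\tau_l}\in\mathbf{B}$. The coaction $\rho:\mathbf{H}\to\mathbf{H}\otimes\mathbf{B}$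 is the algebra morphism with $\rho(P)=\sum_{Q\geq P\text{ noncrossing}}Q\otimes P/Q$. *)

From HB Require Import structures.
From mathcomp Require Import all_boot all_order all_algebra.
Set Implicit Arguments. Unset Strict Implicit. Unset Printing Implicit Defensive.
Import GRing.Theory.
Local Open Scope ring_scope.

(* A (candidate) set partition of [n] = 'I_n, given by its set of blocks.
   Finsets are extensional, so each partition has a unique representative. *)
Record ncp := NCP { ncp_n : nat; ncp_bl : {set {set 'I_ncp_n}} }.

Definition noncrossing n (P : {set {set 'I_n}}) : bool :=
  [forall B in P, forall C in P, (B != C) ==>
     [forall a in B, forall b in B, forall c in C, forall d in C,
        ~~ ((a < c)%N && (c < b)%N && (b < d)%N)]].

Definition nc_partition n (P : {set {set 'I_n}}) : bool :=
  partition P [set: 'I_n] && noncrossing P.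

(* nonempty noncrossing partition: a generator of H and of B *)
Definition ncp_ok (p : ncp) : bool := (0 < ncp_n p)%N && nc_partition (ncp_bl p).

(* words of generators = basis monomials of H *)
Definition word_ok (w : seq ncp) : bool := all ncp_ok w.

Definition refines n (P Q : {set {set 'I_n}}) : bool :=
  [forall B in P, exists C in Q, B \subset C].

Definition rk n (X : {set 'I_n}) (x : 'I_n) : nat := #|[set y in X | (y < x)%N]|.

(* induced partition P_{|X}, transported to [#|X|] *)
Definition restr n (P : {set {set 'I_n}}) (X : {set 'I_n}) : ncp :=
  @NCP #|X| [set [set j : 'I_#|X| | [exists x in B :&: X, rk X x == val j]]
            | B in [set B in P | B :&: X != set0]].

(* P/Q = P_{|tau_1} ... P_{|tau_l}, a monomial of B (listed as a sequence;
   B is commutative, so the order is immaterial) *)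
Definition quot n (P Q : {set {set 'I_n}}) : seq ncp :=
  [seq restr P tau | tau <- enum Q].

(* rho(P) = sum_{Q >= P noncrossing} Q (x) P/Q, as a list of basis tensors *)
Definition rho1 (p : ncp) : seq (seq ncp * seq ncp) :=
  [seq ([:: @NCP (ncp_n p) Q], quot (ncp_bl p) Q)
  | Q <- enum [set Q : {set {set 'I_(ncp_n p)}} | nc_partition Q && refines (ncp_bl p) Q]].

(* rho extended as an algebra morphism to words: rho(p w) = rho(p) rho(w),
   product in H (x) B being concatenation (x) monomial product *)
Fixpoint rho (w : seq ncp) : seq (seq ncp * seq ncp) :=
  match w with
  | [::] => [:: ([::], [::])]
  | p :: w' => [seq (q.1 ++ t.1, q.2 ++ t.2) | q <- rho1 p, t <- rho w']
  end.

Definition epsH (R : nzRingType) (w : seq ncp) : R := if w is [::] then 1 else 0.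

(* infinitesimal character of H (linear form given on basis monomials) *)
Definition infinitesimal (R : nzRingType) (f : seq ncp -> R) : Prop :=
  forall x y, word_ok x -> word_ok y ->
    f (x ++ y) = f x * epsH R y + epsH R x * f y.

Definition Bchar (R : comRingType) (k : ncp -> R) (m : seq ncp) : R :=
  \prod_(x <- m) k x.

(* alpha <- phi := (alpha (x) phi) o rho, on basis monomials of H *)
Definition coact (R : nzRingType) (alpha : seq ncp -> R) (phi : seq ncp -> R)
  (w : seq ncp) : R :=
  \sum_(t <- rho w) alpha t.1 * phi t.2.

Definition eH (R : nzRingType) (w : seq ncp) : R :=
  match w with [:: p] => if #|ncp_bl p| == 1%N then 1 else 0 | _ => 0 end.

(** Both sides vanish off words of length one: an infinitesimal
    character kills the empty word and every product of two nonempty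
    monomials, while [e] only sees the left tensor factor of [rho w], which
    is a word of the same length as [w].  On a single partition [P] the only
    summand of [rho P] on which [e] is nonzero is the one-block partition
    [Q = 1_n], and [P/1_n = P], so [(e <- K)(P) = K(P) = kappa(P)]. *)

From mathcomp Require Import all_boot all_order all_algebra.
Set Implicit Arguments. Unset Strict Implicit. Unset Printing Implicit Defensive.
Import GRing.Theory.
Local Open Scope ring_scope.

Lemma infinitesimal_nil (R : nzRingType) (f : seq ncp -> R) :
  infinitesimal f -> f [::] = 0.
Proof.
move=> /(_ [::] [::] isT isT) /=; rewrite /epsH mulr1 mul1r => /eqP.
by rewrite -{1}[f [::]]addr0 eq_sym => /eqP /addrI.
Qed.

Lemma infinitesimal_cons2 (R : nzRingType) (f : seq ncp -> R) p q w :
  infinitesimal f -> word_ok (p :: q :: w) -> f (p :: q :: w) = 0.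
Proof.
move=> f_inf /andP[p_ok qw_ok].
have p_word : word_ok [:: p] by rewrite /word_ok /= p_ok.
by rewrite -cat1s f_inf // /epsH mulr0 mul0r addr0.
Qed.

Lemma eH_size (R : nzRingType) (w : seq ncp) : size w != 1%N -> eH R w = 0.
Proof. by case: w => [|p [|q w]]. Qed.

Lemma size_rho1 p : all (fun q => size q.1 == 1%N) (rho1 p).
Proof. by rewrite all_map; apply/allP. Qed.

Lemma size_rho w : all (fun t => size t.1 == size w) (rho w).
Proof.
elim: w => [|p w IHw] //=.
elim: (rho1 p) (size_rho1 p) => [|q s IHs] //= /andP[/eqP q_size /IHs].
rewrite all_cat all_map => ->; rewrite andbT.
by apply: sub_all IHw => t /eqP /= t_size; rewrite size_cat q_size t_size.
Qed.

Lemma coact_eH_size (R : nzRingType) (phi : seq ncp -> R) w :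
  size w != 1%N -> coact (@eH R) phi w = 0.
Proof.
move=> w_size; rewrite /coact.
elim: (rho w) (size_rho w) => [|t s IHs]; first by rewrite big_nil.
case/andP=> /eqP t_size /IHs sum_s0.
by rewrite big_cons sum_s0 eH_size ?mul0r ?addr0 ?t_size.
Qed.

Lemma rk_setT n (x : 'I_n) : rk [set: 'I_n] x = x.
Proof.
have x_le : (x <= n)%N by apply: ltnW.
rewrite /rk.
have -> : [set y in [set: 'I_n] | (y < x)%N] = [set widen_ord x_le i | i in 'I_x].
  apply/setP => y; rewrite !inE; apply/idP/imsetP => [y_lt | [i _ ->]].
  - by exists (Ordinal y_lt) => //; apply: val_inj.
  - by rewrite /= ltn_ord.
by rewrite card_imset ?card_ord // => i j /(congr1 val) /= /val_inj.
Qed.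

Lemma restr_setT (p : ncp) : ncp_ok p -> restr (ncp_bl p) [set: 'I_(ncp_n p)] = p.
Proof.
case: p => n P /andP[_ /andP[/and3P[_ _ P_no0] _]]; rewrite /restr /=.
(* [#|setT| = n] holds only propositionally, so the size index is generalized. *)
suff restr_eq m (e : m = n) : @NCP m [set [set j : 'I_m | [exists x in B :&: setT,
    rk [set: 'I_n] x == val j]] | B in [set B in P | B :&: setT != set0]] = NCP P.
  by apply: restr_eq; rewrite cardsT card_ord.
subst m; congr NCP.
have relabel_id (B : {set 'I_n}) :
    [set j : 'I_n | [exists x in B :&: setT, rk [set: 'I_n] x == val j]] = B.
  apply/setP => j; rewrite inE setIT; apply/existsP/idP => [[x] | jB].
  - by case/andP=> xB; rewrite rk_setT => /eqP /val_inj <-.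
  - by exists j; rewrite jB rk_setT eqxx.
apply/setP => B; apply/imsetP/idP => [[C] | BP].
- by rewrite inE relabel_id => /andP[CP _] ->.
- exists B; last by rewrite relabel_id.
  by rewrite inE BP setIT; apply: contraNneq P_no0 => <-.
Qed.

Lemma nc_partition_setT n : (0 < n)%N -> nc_partition [set [set: 'I_n]].
Proof.
move=> n_gt0; rewrite /nc_partition /partition cover1 eqxx trivIset1 /=.
apply/andP; split.
- by rewrite in_set1 eq_sym; apply/set0Pn; exists (Ordinal n_gt0).
- by apply/forall_inP => B /set1P -> ; apply/forall_inP => C /set1P ->; rewrite eqxx.
Qed.

Lemma refines_setT n (P : {set {set 'I_n}}) : refines P [set [set: 'I_n]].
Proof.
by apply/forall_inP => B _; apply/exists_inP; exists setT; rewrite ?set11 ?subsetT.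
Qed.

Lemma partition_card1 n (Q : {set {set 'I_n}}) :
  partition Q [set: 'I_n] -> #|Q| = 1%N -> Q = [set [set: 'I_n]].
Proof.
move=> /and3P[/eqP cover_Q _ _] /eqP /cards1P [B Q_B].
by rewrite Q_B -cover_Q Q_B cover1.
Qed.

Lemma rho_seq1 p : rho [:: p] = rho1 p.
Proof. by rewrite /=; elim: (rho1 p) => //= [[q u] s] ->; rewrite !cats0. Qed.

Lemma coact_eH_single (R : nzRingType) (phi : seq ncp -> R) (p : ncp) :
  ncp_ok p -> coact (@eH R) phi [:: p] = phi [:: p].
Proof.
move=> p_ok; set S := [set Q | nc_partition Q && refines (ncp_bl p) Q].
have top_S : [set [set: 'I_(ncp_n p)]] \in S.
  by rewrite inE nc_partition_setT ?refines_setT //; case/andP: p_ok.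
rewrite /coact rho_seq1 /rho1 big_map big_enum (bigD1 _ top_S) /=.
rewrite big1 => [|Q /andP[Q_S Q_ne_top]]; last first.
  move: (Q_S : Q \in S); rewrite inE => /andP[/andP[Q_part _] _].
  rewrite /eH; case: eqP => [Q_1 | _]; last by rewrite mul0r.
  by move: Q_ne_top; rewrite (partition_card1 Q_part Q_1) eqxx.
by rewrite addr0 /eH cards1 mul1r /quot enum_set1 /= restr_setT.
Qed.

Theorem mainTheorem10 (R : fieldType) (kappa : seq ncp -> R) (K : ncp -> R) :
  infinitesimal kappa ->
  (forall p, ncp_ok p -> K p = kappa [:: p]) ->
  forall w, word_ok w -> kappa w = coact (@eH R) (Bchar K) w.
Proof.
move=> kappa_inf K_kappa [|p [|q w]] w_ok.
- by rewrite coact_eH_size // infinitesimal_nil.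
- have p_ok : ncp_ok p by case/andP: w_ok.
  by rewrite coact_eH_single // /Bchar big_seq1 K_kappa.
- by rewrite coact_eH_size // infinitesimal_cons2.
Qed.
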